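(* Let $N>0$ and $\tau\in(0,1)$. (i) The following are equivalent: $\underline\beta_1(\tau)<4(N+1)$; $4(N+1)-\tau\beta_2^*(\tau)>2(N+1)>\beta_1^{**}(\tau)-\tau\beta_2^*(\tau)$; $\beta_1^{**}(\tau)<4(N+1)$; $\tau\in(0,\tau_0^{(1)})$. Moreover, for every $\tau\in(0,\tau_0^{(1)})$: $$\underline\beta_1(\tau)<4(N+1)=\varphi_2^+(\beta_2^*(\tau)),\quad\text{equivalently}\quad \beta_2^*(\tau)=\varphi_1^+(4(N+1))<\overline\beta_2(\tau),$$ and $\beta_1^{**}(\tau)=\varphi_2^-(\beta_2^*(\tau))<\underline\beta_1(\tau)$. (ii) The following are equivalent: $\underline\beta_2(\tau)<4$; $4-\tau\beta_1^*(\tau)>2>\beta_2^{**}(\tau)-\tau\beta_1^*(\tau)$; $\beta_2^{**}(\tau)<4$; $\tau\in(0,\tau_0^{(2)})$. Moreover, for every $\tau\in(0,\tau_0^{(2)})$: $$\underline\beta_2(\tau)<4=\varphi_1^+(\beta_1^*(\tau)),\quad\text{equivalently}\quad \beta_1^*(\tau)=\varphi_2^+(4)<\overline\beta_1(\tau),$$ and $\beta_2^{**}(\tau)=\varphi_1^-(\beta_1^*(\tau))<\underline\beta_2(\tau)$.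
   Context: With $D=(N+1)^2+2\tau(N+1)+1$: $$\underline\beta_1(\tau)=\tfrac{2}{1-\tau^2}(N+1+\tau+\tau\sqrt D),\qquad \overline\beta_1(\tau)=\tfrac{2}{1-\tau^2}(N+1+\tau+\sqrt D),$$ $$\underline\beta_2(\tau)=\tfrac{2}{1-\tau^2}(1+\tau(N+1)+\tau\sqrt D),\qquad \overline\beta_2(\tau)=\tfrac{2}{1-\tau^2}(1+\tau(N+1)+\sqrt D);$$ $$\beta_1^*(\tau)=4(N+1)+8\tau,\quad \beta_2^*(\tau)=4+8\tau(N+1),\quad \beta_1^{**}(\tau)=8\tau(1+2\tau(N+1)),\quad \beta_2^{**}(\tau)=8\tau(N+1+2\tau);$$ $$\tau_0^{(1)}=\frac{N+1}{1+\sqrt{1+4(N+1)^2}},\qquad \tau_0^{(2)}=\frac{1}{N+1+\sqrt{(N+1)^2+4}};$$ $$\varphi_1^\pm(\beta_1)=2+\tau\beta_1\pm\sqrt{(2+\tau\beta_1)^2-\beta_1(\beta_1-4(N+1))}\quad (0<\beta_1\le\overline\beta_1(\tau)),$$ $$\varphi_2^\pm(\beta_2)=2(N+1)+\tau\beta_2\pm\sqrt{(2(N+1)+\tau\beta_2)^2-\beta_2(\beta_2-4)}\quad (0<\beta_2\le\overline\beta_2(\tau)).$$ *)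

From HB Require Import structures.
From mathcomp Require Import all_boot all_order all_algebra.
Set Implicit Arguments. Unset Strict Implicit. Unset Printing Implicit Defensive.
Import Order.TTheory GRing.Theory Num.Theory.
Local Open Scope ring_scope.

Section Defs.
Variable R : rcfType.
Variable N : nat.
Local Notation M := (N.+1%:R : R).

Definition Dd (tau : R) : R := M ^+ 2 + 2 * tau * M + 1.

Definition beta1_low (tau : R) : R :=
  2 / (1 - tau ^+ 2) * (M + tau + tau * Num.sqrt (Dd tau)).
Definition beta1_up (tau : R) : R :=
  2 / (1 - tau ^+ 2) * (M + tau + Num.sqrt (Dd tau)).
Definition beta2_low (tau : R) : R :=
  2 / (1 - tau ^+ 2) * (1 + tau * M + tau * Num.sqrt (Dd tau)).
Definition beta2_up (tau : R) : R :=
  2 / (1 - tau ^+ 2) * (1 + tau * M + Num.sqrt (Dd tau)).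

Definition beta1_star (tau : R) : R := 4 * M + 8 * tau.
Definition beta2_star (tau : R) : R := 4 + 8 * tau * M.
Definition beta1_sstar (tau : R) : R := 8 * tau * (1 + 2 * tau * M).
Definition beta2_sstar (tau : R) : R := 8 * tau * (M + 2 * tau).

Definition tau0_1 : R := M / (1 + Num.sqrt (1 + 4 * M ^+ 2)).
Definition tau0_2 : R := 1 / (M + Num.sqrt (M ^+ 2 + 4)).

(* phi functions; written as total functions (the paper uses them only on
   0 < beta <= beta_up tau, where the discriminant is nonnegative). *)
Definition phi1p (tau b1 : R) : R :=
  2 + tau * b1 + Num.sqrt ((2 + tau * b1) ^+ 2 - b1 * (b1 - 4 * M)).
Definition phi1m (tau b1 : R) : R :=
  2 + tau * b1 - Num.sqrt ((2 + tau * b1) ^+ 2 - b1 * (b1 - 4 * M)).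
Definition phi2p (tau b2 : R) : R :=
  2 * M + tau * b2 + Num.sqrt ((2 * M + tau * b2) ^+ 2 - b2 * (b2 - 4)).
Definition phi2m (tau b2 : R) : R :=
  2 * M + tau * b2 - Num.sqrt ((2 * M + tau * b2) ^+ 2 - b2 * (b2 - 4)).
End Defs.

(* Both parts are the cases (a, b) = (N + 1, 1) and (a, b) = (1, N + 1) of one
   statement.  Every condition in it is equivalent to 0 < g, where
   g = a - 2 b tau - 4 a tau^2 is the quadratic whose positive root is tau0.
   At beta_star the discriminant of phi is (2 g)^2, which yields the values of
   phi^+ and phi^-.  The comparisons with beta_low and beta_up become, after
   clearing 1 - tau^2, comparisons of a polynomial in tau with tau sqrt D or
   sqrt D; squaring turns each difference into a positive multiple of g. *)
From HB Require Import structures.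
From mathcomp Require Import all_boot all_order all_algebra.
From mathcomp Require Import ring lra.
Set Implicit Arguments.
Unset Strict Implicit.
Unset Printing Implicit Defensive.

Import Order.TTheory GRing.Theory Num.Theory.
Local Open Scope ring_scope.

Lemma lt_of_sqr_lt (R : realDomainType) (x y : R) :
  0 <= y -> x ^+ 2 < y ^+ 2 -> x < y.
Proof. by move=> y_ge0 xy2; rewrite ltNge; apply/negP => yx; nra. Qed.

Lemma sqrtr_sqr_ge0 (R : rcfType) (x : R) : 0 <= x -> Num.sqrt (x ^+ 2) = x.
Proof. by move=> x_ge0; rewrite sqrtr_sqr ger0_norm. Qed.

Section Thresholds.
Variable R : rcfType.
Implicit Types (a b tau x : R).

Definition disc a b tau := a ^+ 2 + 2 * tau * a * b + b ^+ 2.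

Definition beta_low a b tau :=
  2 / (1 - tau ^+ 2) * (a + tau * b + tau * Num.sqrt (disc a b tau)).
Definition beta_up a b tau :=
  2 / (1 - tau ^+ 2) * (a + tau * b + Num.sqrt (disc a b tau)).
Definition beta_star a b tau := 4 * a + 8 * tau * b.
Definition beta_sstar a b tau := 8 * tau * (b + 2 * tau * a).
Definition tau0 a b := a / (b + Num.sqrt (b ^+ 2 + 4 * a ^+ 2)).

Definition phi_disc a b tau x := (2 * b + tau * x) ^+ 2 - x * (x - 4 * a).
Definition phip a b tau x := 2 * b + tau * x + Num.sqrt (phi_disc a b tau x).
Definition phim a b tau x := 2 * b + tau * x - Num.sqrt (phi_disc a b tau x).

Definition gap a b tau := a - 2 * tau * b - 4 * a * tau ^+ 2.

Lemma disc_sym a b tau : disc a b tau = disc b a tau.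
Proof. by rewrite /disc; ring. Qed.

Lemma tau_beta_star_gap a b tau : tau * beta_star b a tau = 2 * a - 2 * gap a b tau.
Proof. by rewrite /beta_star /gap; ring. Qed.

Lemma beta_sstar_gap a b tau : beta_sstar a b tau = 4 * a - 4 * gap a b tau.
Proof. by rewrite /beta_sstar /gap; ring. Qed.

Lemma phi_disc_beta_star a b tau :
  phi_disc b a tau (beta_star b a tau) = (2 * gap a b tau) ^+ 2.
Proof. by rewrite /phi_disc /beta_star /gap; ring. Qed.

Variables a b tau : R.

Local Notation k := (1 - tau ^+ 2).
Local Notation s := (Num.sqrt (disc a b tau)).
Local Notation g := (gap a b tau).
Local Notation r := (Num.sqrt (b ^+ 2 + 4 * a ^+ 2)).

Lemma sub1_sqr_gt0 : 0 < tau < 1 -> 0 < k.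
Proof. by case/andP=> tau_gt0 tau_lt1; rewrite subr_gt0 expr2; nra. Qed.

Lemma sqr_sqrt_disc : 0 < a -> 0 < b -> 0 < tau -> s ^+ 2 = disc a b tau.
Proof.
move=> a_gt0 b_gt0 tau_gt0.
by rewrite sqr_sqrtr // /disc !addr_ge0 ?sqr_ge0 // !mulr_ge0 ?ltW.
Qed.

Lemma scaled_ltE x c : 0 < k -> (2 / k * x < c) = (2 * x < c * k).
Proof. by move=> k_gt0; rewrite mulrAC ltr_pdivrMr. Qed.

Lemma lt_scaledE x c : 0 < k -> (c < 2 / k * x) = (c * k < 2 * x).
Proof. by move=> k_gt0; rewrite mulrAC ltr_pdivlMr. Qed.

Lemma sqr_sqrt_tau0 : r ^+ 2 = b ^+ 2 + 4 * a ^+ 2.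
Proof. by rewrite sqr_sqrtr //; nra. Qed.

Lemma tau0E : 0 < a -> 0 < b -> tau0 a b = (r - b) / (4 * a).
Proof.
move=> a_gt0 b_gt0; have r_ge0 : 0 <= r := sqrtr_ge0 _.
apply/eqP; rewrite /tau0 eqr_div; [|lra|lra].
by apply/eqP; have := sqr_sqrt_tau0; nra.
Qed.

Lemma gap_factor : 4 * a * g = (r - b - 4 * a * tau) * (r + b + 4 * a * tau).
Proof.
have -> : (r - b - 4 * a * tau) * (r + b + 4 * a * tau)
          = r ^+ 2 - (b + 4 * a * tau) ^+ 2 by ring.
by rewrite sqr_sqrt_tau0 /gap; ring.
Qed.

Lemma gap_gt0E : 0 < a -> 0 < b -> 0 < tau -> (0 < g) = (tau < tau0 a b).
Proof.
move=> a_gt0 b_gt0 tau_gt0; have r_ge0 : 0 <= r := sqrtr_ge0 _.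
rewrite tau0E // ltr_pdivlMr; last lra.
rewrite -(pmulr_rgt0 _ (_ : 0 < 4 * a)); last lra.
rewrite gap_factor pmulr_lgt0; last nra.
by apply/idP/idP => ?; lra.
Qed.

Lemma beta_low_lt4_gap :
  0 < a -> 0 < b -> 0 < tau < 1 -> (beta_low a b tau < 4 * a) <-> 0 < g.
Proof.
move=> a_gt0 b_gt0 tau01; have k_gt0 := sub1_sqr_gt0 tau01.
case/andP: tau01 => tau_gt0 tau_lt1.
rewrite /beta_low scaled_ltE //.
set c := a - tau * b - 2 * a * tau ^+ 2.
have sqr_diff : c ^+ 2 - (tau * s) ^+ 2 = a * k * g.
  by rewrite exprMn sqr_sqrt_disc // /c /disc /gap; ring.
have ts_ge0 : 0 <= tau * s by rewrite mulr_ge0 ?sqrtr_ge0 //; lra.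
split=> [low_lt4 | g_gt0].
- have cs : tau * s < c by rewrite /c; nra.
  have : 0 < a * k * g by rewrite -sqr_diff; nra.
  by rewrite -mulrA !pmulr_rgt0.
- have : tau * s < c.
    apply: lt_of_sqr_lt; first by rewrite /c /gap in g_gt0 *; nra.
    by rewrite -subr_gt0 sqr_diff !mulr_gt0.
  rewrite /c; nra.
Qed.

Lemma beta_star_bounds_gap :
  (2 * a < 4 * a - tau * beta_star b a tau
   /\ beta_sstar a b tau - tau * beta_star b a tau < 2 * a)
  <-> 0 < g.
Proof. rewrite tau_beta_star_gap beta_sstar_gap; split => [[] | ]; lra. Qed.

Lemma beta_sstar_lt4_gap : beta_sstar a b tau < 4 * a <-> 0 < g.
Proof. by rewrite beta_sstar_gap; split; lra. Qed.

Lemma gap_gt0_sqr : 0 < a -> 0 < b -> 0 < tau -> 0 < g -> 4 * tau ^+ 2 < 1.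
Proof. by rewrite /gap => a_gt0 b_gt0 tau_gt0 g_gt0; nra. Qed.

Lemma phip_beta_star : 0 < g -> phip b a tau (beta_star b a tau) = 4 * a.
Proof.
move=> g_gt0; rewrite /phip phi_disc_beta_star sqrtr_sqr_ge0; last lra.
by rewrite /beta_star /gap; ring.
Qed.

Lemma phim_beta_star : 0 < g -> phim b a tau (beta_star b a tau) = beta_sstar a b tau.
Proof.
move=> g_gt0; rewrite /phim phi_disc_beta_star sqrtr_sqr_ge0; last lra.
by rewrite /beta_star /beta_sstar /gap; ring.
Qed.

Lemma phip_4a : 0 < a -> 0 < b -> 0 < tau -> phip a b tau (4 * a) = beta_star b a tau.
Proof.
move=> a_gt0 b_gt0 tau_gt0; rewrite /phip.
have -> : phi_disc a b tau (4 * a) = (2 * b + 4 * a * tau) ^+ 2.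
  by rewrite /phi_disc; ring.
rewrite sqrtr_sqr_ge0; last nra.
by rewrite /beta_star; ring.
Qed.

Lemma beta_star_lt_up :
  0 < a -> 0 < b -> 0 < tau < 1 -> 0 < g -> beta_star b a tau < beta_up b a tau.
Proof.
move=> a_gt0 b_gt0 tau01 g_gt0; have k_gt0 := sub1_sqr_gt0 tau01.
case/andP: tau01 => tau_gt0 tau_lt1.
rewrite /beta_up lt_scaledE // -disc_sym.
set L := b + 3 * tau * a - 2 * tau ^+ 2 * b - 4 * tau ^+ 3 * a.
have -> : beta_star b a tau * k = 2 * (b + tau * a) + 2 * L.
  by rewrite /beta_star /L; ring.
have : L < s.
  apply: lt_of_sqr_lt; first exact: sqrtr_ge0.
  have sqr_diff : s ^+ 2 - L ^+ 2 = k * g ^+ 2.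
    by rewrite sqr_sqrt_disc // /L /disc /gap; ring.
  by rewrite -subr_gt0 sqr_diff mulr_gt0 ?exprn_gt0.
lra.
Qed.

Lemma beta_sstar_lt_low :
  0 < a -> 0 < b -> 0 < tau < 1 -> 0 < g -> beta_sstar a b tau < beta_low a b tau.
Proof.
move=> a_gt0 b_gt0 tau01 g_gt0; have k_gt0 := sub1_sqr_gt0 tau01.
case/andP: tau01 => tau_gt0 tau_lt1.
rewrite /beta_low lt_scaledE //.
set K := 4 * tau * (b + 2 * tau * a) * k - a - tau * b.
have -> : beta_sstar a b tau * k = 2 * K + 2 * a + 2 * tau * b.
  by rewrite /beta_sstar /K; ring.
have ts_ge0 : 0 <= tau * s by rewrite mulr_ge0 ?sqrtr_ge0 //; lra.
have : K < tau * s.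
  have [K_lt0 | K_ge0] := ltrP K 0; first lra.
  set Q := - a + 4 * tau * b + 12 * a * tau ^+ 2 - 8 * b * tau ^+ 3
           - 16 * a * tau ^+ 4.
  have Q_gt0 : 0 < Q.
    have -> : Q = K + tau * b * (1 - 4 * tau ^+ 2)
                  + 4 * a * tau ^+ 2 * (1 - 2 * tau ^+ 2) by rewrite /Q /K; ring.
    have tau_sqr := gap_gt0_sqr a_gt0 b_gt0 tau_gt0 g_gt0.
    have : 0 < tau * b * (1 - 4 * tau ^+ 2) by rewrite !mulr_gt0 // subr_gt0.
    have : 0 <= 4 * a * tau ^+ 2 * (1 - 2 * tau ^+ 2).
      by rewrite !mulr_ge0 ?sqr_ge0 //; lra.
    lra.
  apply: lt_of_sqr_lt => //.
  have sqr_diff : (tau * s) ^+ 2 - K ^+ 2 = k * g * Q.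
    by rewrite exprMn sqr_sqrt_disc // /K /Q /disc /gap; ring.
  by rewrite -subr_gt0 sqr_diff !mulr_gt0.
lra.
Qed.

Theorem beta_thresholds :
  0 < a -> 0 < b -> 0 < tau < 1 ->
  ((beta_low a b tau < 4 * a) <->
      (2 * a < 4 * a - tau * beta_star b a tau
       /\ beta_sstar a b tau - tau * beta_star b a tau < 2 * a))
  /\ ((2 * a < 4 * a - tau * beta_star b a tau
       /\ beta_sstar a b tau - tau * beta_star b a tau < 2 * a)
      <-> (beta_sstar a b tau < 4 * a))
  /\ ((beta_sstar a b tau < 4 * a) <-> (0 < tau < tau0 a b))
  /\ (tau < tau0 a b ->
       (beta_low a b tau < 4 * a /\ 4 * a = phip b a tau (beta_star b a tau))
       /\ (beta_star b a tau = phip a b tau (4 * a)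
           /\ beta_star b a tau < beta_up b a tau)
       /\ beta_sstar a b tau = phim b a tau (beta_star b a tau)
       /\ beta_sstar a b tau < beta_low a b tau).
Proof.
move=> a_gt0 b_gt0 tau01; have /andP[tau_gt0 _] := tau01.
have low_gap := beta_low_lt4_gap a_gt0 b_gt0 tau01.
split; first exact: iff_trans low_gap (iff_sym beta_star_bounds_gap).
split; first exact: iff_trans beta_star_bounds_gap (iff_sym beta_sstar_lt4_gap).
split; first by rewrite beta_sstar_lt4_gap gap_gt0E // tau_gt0.
rewrite -gap_gt0E // => g_gt0.
rewrite phip_beta_star // phim_beta_star // phip_4a //.
by do !split=> //; [exact/low_gap | exact: beta_star_lt_up | exact: beta_sstar_lt_low].
Qed.

End Thresholds.
Section PaperInstances.
Variables (R : rcfType) (N : nat) (tau : R).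
Local Notation M := (N.+1%:R : R).

Lemma Dd_disc : Dd N tau = disc M 1 tau.
Proof. by rewrite /Dd /disc mulr1 expr1n. Qed.

Lemma beta1_lowE : beta1_low N tau = beta_low M 1 tau.
Proof. by rewrite /beta1_low /beta_low Dd_disc mulr1. Qed.

Lemma beta1_upE : beta1_up N tau = beta_up M 1 tau.
Proof. by rewrite /beta1_up /beta_up Dd_disc mulr1. Qed.

Lemma beta2_lowE : beta2_low N tau = beta_low 1 M tau.
Proof. by rewrite /beta2_low /beta_low Dd_disc disc_sym. Qed.

Lemma beta2_upE : beta2_up N tau = beta_up 1 M tau.
Proof. by rewrite /beta2_up /beta_up Dd_disc disc_sym. Qed.

Lemma beta1_starE : beta1_star N tau = beta_star M 1 tau.
Proof. by rewrite /beta1_star /beta_star mulr1. Qed.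

Lemma beta2_starE : beta2_star N tau = beta_star 1 M tau.
Proof. by rewrite /beta2_star /beta_star mulr1. Qed.

Lemma beta1_sstarE : beta1_sstar N tau = beta_sstar M 1 tau.
Proof. by []. Qed.

Lemma beta2_sstarE : beta2_sstar N tau = beta_sstar 1 M tau.
Proof. by rewrite /beta2_sstar /beta_sstar mulr1. Qed.

Lemma tau0_1E : tau0_1 R N = tau0 M 1.
Proof. by rewrite /tau0_1 /tau0 expr1n. Qed.

Lemma tau0_2E : tau0_2 R N = tau0 1 M.
Proof. by rewrite /tau0_2 /tau0 expr1n mulr1. Qed.

Lemma phi1pE x : phi1p N tau x = phip M 1 tau x.
Proof. by rewrite /phi1p /phip /phi_disc mulr1. Qed.

Lemma phi1mE x : phi1m N tau x = phim M 1 tau x.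
Proof. by rewrite /phi1m /phim /phi_disc mulr1. Qed.

Lemma phi2pE x : phi2p N tau x = phip 1 M tau x.
Proof. by rewrite /phi2p /phip /phi_disc mulr1. Qed.

Lemma phi2mE x : phi2m N tau x = phim 1 M tau x.
Proof. by rewrite /phi2m /phim /phi_disc mulr1. Qed.

End PaperInstances.

Theorem mainTheorem15 (R : rcfType) (N : nat) (tau : R) :
  (0 < N)%N -> 0 < tau < 1 ->
  let M : R := N.+1%:R in
  (* (i) *)
  (((beta1_low N tau < 4 * M) <->
      (2 * M < 4 * M - tau * beta2_star N tau /\ beta1_sstar N tau - tau * beta2_star N tau < 2 * M))
   /\ ((2 * M < 4 * M - tau * beta2_star N tau /\ beta1_sstar N tau - tau * beta2_star N tau < 2 * M)
       <-> (beta1_sstar N tau < 4 * M))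
   /\ ((beta1_sstar N tau < 4 * M) <-> (0 < tau < tau0_1 R N))
   /\ (tau < tau0_1 R N ->
        (beta1_low N tau < 4 * M /\ 4 * M = phi2p N tau (beta2_star N tau))
        /\ (beta2_star N tau = phi1p N tau (4 * M) /\ beta2_star N tau < beta2_up N tau)
        /\ beta1_sstar N tau = phi2m N tau (beta2_star N tau)
        /\ beta1_sstar N tau < beta1_low N tau))
  /\
  (* (ii) *)
  (((beta2_low N tau < 4) <->
      (2 < 4 - tau * beta1_star N tau /\ beta2_sstar N tau - tau * beta1_star N tau < 2))
   /\ ((2 < 4 - tau * beta1_star N tau /\ beta2_sstar N tau - tau * beta1_star N tau < 2)
       <-> (beta2_sstar N tau < 4))
   /\ ((beta2_sstar N tau < 4) <-> (0 < tau < tau0_2 R N))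
   /\ (tau < tau0_2 R N ->
        (beta2_low N tau < 4 /\ 4 = phi1p N tau (beta1_star N tau))
        /\ (beta1_star N tau = phi2p N tau 4 /\ beta1_star N tau < beta1_up N tau)
        /\ beta2_sstar N tau = phi1m N tau (beta1_star N tau)
        /\ beta2_sstar N tau < beta2_low N tau)).

Proof.
(* only [0 < N + 1] is needed *)
move=> _ tau01 M; have M_gt0 : 0 < M := ltr0Sn _ _.
rewrite beta1_lowE beta2_lowE beta1_upE beta2_upE beta1_starE beta2_starE.
rewrite beta1_sstarE beta2_sstarE tau0_1E tau0_2E.
rewrite !(phi1pE, phi1mE, phi2pE, phi2mE).
split; first exact: beta_thresholds.
by have := beta_thresholds ltr01 M_gt0 tau01; rewrite !mulr1.
Qed.
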